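(* There is an evolution system $v^1_t=R^1$, $v^2_t=R^2$ (with $R^i$ depending on $v^1,v^2$ and finitely many of their $x$-derivatives) such that whenever $(v^1,v^2)$ satisfies it, the functions $$u^1=v^1_2+(v^1_1)^2+\bigl(v^2_1+v^1_1v^2-\mathrm{e}^{-3v^1}\bigr)^2,\qquad u^2=v^2_1+v^1_1v^2-\mathrm{e}^{-3v^1}$$ satisfy the Kersten–Krasilshchik system $$u^1_t=-u^1_3+6u^1u^1_1-3u^2u^2_3-3u^2_1u^2_2+3u^1_1(u^2)^2+6u^1u^2u^2_1,\qquad u^2_t=-u^2_3+3(u^2)^2u^2_1+3u^1u^2_1+3u^1_1u^2.$$
   Context: $u^i_j=\partial^ju^i/\partial x^j$, $v^i_j=\partial^jv^i/\partial x^j$. Complex-analytic, local considerations. *)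

From Stdlib Require Import Reals.
From Coquelicot Require Import Coquelicot.

Open Scope C_scope.

Definition cexp (z : C) : C :=
  ((exp (fst z) * cos (snd z))%R, (exp (fst z) * sin (snd z))%R).

Definition is_pdx (U : C -> C -> Prop) (f g : C -> C -> C) : Prop :=
  forall t x, U t x -> is_derive (fun y => f t y) x (g t x).
Definition is_pdt (U : C -> C -> Prop) (f g : C -> C -> C) : Prop :=
  forall t x, U t x -> is_derive (fun s => f s x) t (g t x).

Definition open2 (U : C -> C -> Prop) : Prop :=
  forall t x, U t x -> exists eps : R, (0 < eps)%R /\
    forall t' x', (Cmod (t' - t) < eps)%R -> (Cmod (x' - x) < eps)%R -> U t' x'.

(** [F] is a family of all mixed partial derivatives on U:
    F a b = d^a/dt^a d^b/dx^b (F 0 0).  For an open U this says exactly that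
    F 0 0 is holomorphic on U (Hartogs) and lists its derivatives. *)
Definition deriv_family (U : C -> C -> Prop) (F : nat -> nat -> C -> C -> C) : Prop :=
  forall a b, is_pdx U (F a b) (F a (S b)) /\ is_pdt U (F a b) (F (S a) b).

(** Jets: the values v, v_1, v_2, ... of the x-derivatives of a function. *)
Definition jet := nat -> C.

Definition jet_at (F : nat -> nat -> C -> C -> C) (t x : C) : jet :=
  fun k => F O k t x.

Definition jupd (j : jet) (k : nat) (z : C) : jet :=
  fun i => if Nat.eqb i k then z else j i.

Definition depends_upto (N : nat) (R : jet -> jet -> C) : Prop :=
  forall j1 j2 k1 k2 : jet,
    (forall k, (k <= N)%nat -> j1 k = k1 k /\ j2 k = k2 k) -> R j1 j2 = R k1 k2.
Definition set_depends_upto (N : nat) (D : jet -> jet -> Prop) : Prop :=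
  forall j1 j2 k1 k2 : jet,
    (forall k, (k <= N)%nat -> j1 k = k1 k /\ j2 k = k2 k) -> (D j1 j2 <-> D k1 k2).

Definition jet_open (N : nat) (D : jet -> jet -> Prop) : Prop :=
  forall j1 j2, D j1 j2 -> exists eps : R, (0 < eps)%R /\
    forall k1 k2 : jet,
      (forall k, (k <= N)%nat -> (Cmod (k1 k - j1 k) < eps)%R /\
                                  (Cmod (k2 k - j2 k) < eps)%R) ->
      D k1 k2.

(** R is holomorphic on D (separately holomorphic in each of the finitely many
    jet coordinates, which on an open set is holomorphy by Hartogs). *)
Definition holo_on_jets (N : nat) (D : jet -> jet -> Prop) (R : jet -> jet -> C) : Prop :=
  forall j1 j2, D j1 j2 -> forall k, (k <= N)%nat ->
    ex_derive (fun z => R (jupd j1 k z) j2) (j1 k) /\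
    ex_derive (fun z => R j1 (jupd j2 k z)) (j2 k).

Definition evolution_system (N : nat) (D : jet -> jet -> Prop) (R1 R2 : jet -> jet -> C) : Prop :=
  depends_upto N R1 /\ depends_upto N R2 /\ set_depends_upto N D /\
  jet_open N D /\ (exists j1 j2, D j1 j2) /\
  holo_on_jets N D R1 /\ holo_on_jets N D R2.

Definition is_solution (D : jet -> jet -> Prop) (R1 R2 : jet -> jet -> C)
    (U : C -> C -> Prop) (V1 V2 : nat -> nat -> C -> C -> C) : Prop :=
  open2 U /\ deriv_family U V1 /\ deriv_family U V2 /\
  forall t x, U t x ->
    D (jet_at V1 t x) (jet_at V2 t x) /\
    V1 1%nat O t x = R1 (jet_at V1 t x) (jet_at V2 t x) /\
    V2 1%nat O t x = R2 (jet_at V1 t x) (jet_at V2 t x).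

Definition miura_u2 (V1 V2 : nat -> nat -> C -> C -> C) (t x : C) : C :=
  V2 O 1%nat t x + V1 O 1%nat t x * V2 O O t x - cexp (- (RtoC 3) * V1 O O t x).
Definition miura_u1 (V1 V2 : nat -> nat -> C -> C -> C) (t x : C) : C :=
  V1 O 2%nat t x + V1 O 1%nat t x * V1 O 1%nat t x
  + miura_u2 V1 V2 t x * miura_u2 V1 V2 t x.

Definition KK_solution (U : C -> C -> Prop) (u1 u2 : C -> C -> C) : Prop :=
  exists W1 W2 : nat -> nat -> C -> C -> C,
    deriv_family U W1 /\ deriv_family U W2 /\
    (forall t x, W1 O O t x = u1 t x /\ W2 O O t x = u2 t x) /\
    forall t x, U t x ->
      let a := W1 O O t x in let a1 := W1 O 1%nat t x in
      let a3 := W1 O 3%nat t x in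
      let b := W2 O O t x in let b1 := W2 O 1%nat t x in
      let b2 := W2 O 2%nat t x in let b3 := W2 O 3%nat t x in
      W1 1%nat O t x =
        - a3 + RtoC 6 * a * a1 - RtoC 3 * b * b3 - RtoC 3 * b1 * b2
        + RtoC 3 * a1 * (b * b) + RtoC 6 * a * b * b1 /\
      W2 1%nat O t x =
        - b3 + RtoC 3 * (b * b) * b1 + RtoC 3 * a * b1 + RtoC 3 * a1 * b.

(* Along a solution, every mixed partial derivative of u^1, u^2 is the value of a
   differential polynomial in v^1, v^2 and E = e^{-3 v^1}, obtained by applying the
   commuting total derivatives D_x, D_t (with D E = -3 (D v^1) E). On a solution,
   d_x^b d_t v^i is D_x^b of the i-th right-hand side, because derivatives are unique
   on an open set. After this substitution both Kersten--Krasilshchik equations are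
   polynomial identities in the x-jets of v^1, v^2 and in E. *)

From Stdlib Require Import Reals Lra Lia FunctionalExtensionality.
From Coquelicot Require Import Coquelicot.

Open Scope R_scope.

Lemma MVT_bound_0 (f f' : R -> R) (x M : R) :
  (forall c, derivable_pt_lim f c (f' c)) ->
  (forall c, Rabs c <= Rabs x -> Rabs (f' c) <= M) ->
  Rabs (f x - f 0) <= M * Rabs x.
Proof.
  intros Hd HM.
  destruct (MVT_abs f f' 0 x (fun c _ => Hd c)) as [c [E Hc]].
  rewrite E, Rminus_0_r.
  apply Rmult_le_compat_r; [apply Rabs_pos|apply HM].
  unfold Rmin, Rmax in Hc; destruct (Rle_dec 0 x);
    unfold Rabs; destruct (Rcase_abs c), (Rcase_abs x); lra.
Qed.

Lemma Rabs_sin_le (x : R) : Rabs (sin x) <= Rabs x.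
Proof.
  rewrite <- (Rminus_0_r (sin x)), <- sin_0, <- (Rmult_1_l (Rabs x)).
  apply (MVT_bound_0 sin cos); [exact derivable_pt_lim_sin|].
  intros c _; apply Rabs_le, COS_bound.
Qed.

Lemma Rabs_cos_sub_1_le (x : R) : Rabs (cos x - 1) <= Rabs x * Rabs x.
Proof.
  rewrite <- cos_0.
  apply (MVT_bound_0 cos (fun c => - sin c)); [exact derivable_pt_lim_cos|].
  intros c Hc; rewrite Rabs_Ropp; eapply Rle_trans; [apply Rabs_sin_le|exact Hc].
Qed.

Lemma Rabs_sin_sub_id_le (x : R) : Rabs x <= 1 -> Rabs (sin x - x) <= Rabs x * Rabs x.
Proof.
  intros Hx.
  replace (sin x - x) with ((sin x - x) - (sin 0 - 0)) by (rewrite sin_0; ring).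
  apply (MVT_bound_0 (fun y => sin y - y) (fun c => cos c - 1)).
  - intros c; apply derivable_pt_lim_minus;
      [apply derivable_pt_lim_sin|apply derivable_pt_lim_id].
  - intros c Hc; eapply Rle_trans; [apply Rabs_cos_sub_1_le|].
    pose proof (Rabs_pos c); nra.
Qed.

Lemma exp_le_3_of_le_1 (a : R) : a <= 1 -> exp a <= 3.
Proof.
  intros Ha; eapply Rle_trans; [|apply exp_le_3].
  destruct (Rle_lt_or_eq_dec a 1 Ha) as [Hlt| ->]; [|apply Rle_refl].
  left; apply exp_increasing, Hlt.
Qed.

Lemma Rabs_exp_sub_1_le (a : R) : Rabs a <= 1 -> Rabs (exp a - 1) <= 3 * Rabs a.
Proof.
  intros Ha; rewrite <- exp_0.
  apply (MVT_bound_0 exp exp); [exact derivable_pt_lim_exp|].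
  intros c Hc; rewrite Rabs_pos_eq by (left; apply exp_pos).
  apply exp_le_3_of_le_1; pose proof (Rle_abs c); lra.
Qed.

Lemma Rabs_exp_sub_1_sub_id_le (a : R) :
  Rabs a <= 1 -> Rabs (exp a - 1 - a) <= 3 * Rabs a * Rabs a.
Proof.
  intros Ha.
  replace (exp a - 1 - a) with ((exp a - a) - (exp 0 - 0)) by (rewrite exp_0; ring).
  apply (MVT_bound_0 (fun y => exp y - y) (fun c => exp c - 1)).
  - intros c; apply derivable_pt_lim_minus;
      [apply derivable_pt_lim_exp|apply derivable_pt_lim_id].
  - intros c Hc; eapply Rle_trans; [apply Rabs_exp_sub_1_le; lra|lra].
Qed.

Lemma Cmod_le_Rabs_add (a b : R) : Cmod (a, b) <= Rabs a + Rabs b.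
Proof.
  replace (a, b) with (RtoC a + RtoC b * Ci)%C
    by (apply injective_projections; simpl; ring).
  eapply Rle_trans; [apply Cmod_triangle|].
  rewrite Cmod_mult, Cmod_Ci, !Cmod_R; lra.
Qed.

Lemma cexp_add (z h : C) : cexp (z + h) = (cexp z * cexp h)%C.
Proof.
  destruct z as [x y], h as [a b]; unfold cexp; simpl.
  rewrite exp_plus, cos_plus, sin_plus.
  apply injective_projections; simpl; ring.
Qed.

Lemma cexp_remainder (h : C) :
  Cmod h <= 1 -> Cmod (cexp h - 1 - h)%C <= 12 * Cmod h * Cmod h.
Proof.
  destruct h as [a b]; intros Hh.
  assert (Ha : Rabs a <= Cmod (a, b)) by apply (re_le_Cmod (a, b)).
  assert (Hb : Rabs b <= Cmod (a, b)).
  { pose proof (Rmax_Cmod (a, b)) as Hm; simpl in Hm.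
    pose proof (Rmax_r (Rabs a) (Rabs b)); lra. }
  set (m := Cmod (a, b)) in *.
  replace (cexp (a, b) - 1 - (a, b))%C with
    ((exp a * (cos b - 1) + (exp a - 1 - a),
      exp a * (sin b - b) + (exp a - 1) * b)%R : C)
    by (unfold cexp, Cminus, Cplus, Copp; apply injective_projections; simpl; ring).
  eapply Rle_trans; [apply Cmod_le_Rabs_add|].
  eapply Rle_trans; [apply Rplus_le_compat; apply Rabs_triang|].
  rewrite !Rabs_mult, (Rabs_pos_eq (exp a)) by (left; apply exp_pos).
  pose proof (exp_pos a); pose proof (Rabs_pos a); pose proof (Rabs_pos b).
  pose proof (exp_le_3_of_le_1 a ltac:(pose proof (Rle_abs a); lra)).
  pose proof (Rabs_cos_sub_1_le b).
  pose proof (Rabs_sin_sub_id_le b ltac:(lra)).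
  pose proof (Rabs_exp_sub_1_le a ltac:(lra)).
  pose proof (Rabs_exp_sub_1_sub_id_le a ltac:(lra)).
  assert (exp a * Rabs (cos b - 1) <= 3 * (m * m)) by nra.
  assert (Rabs (exp a - 1 - a) <= 3 * (m * m)) by nra.
  assert (exp a * Rabs (sin b - b) <= 3 * (m * m)) by nra.
  assert (Rabs (exp a - 1) * Rabs b <= 3 * (m * m)) by nra.
  lra.
Qed.

(* [C_NormedModule] (used by [is_pdx], [is_pdt]) and [AbsRing_NormedModule C_AbsRing]
   (used by Coquelicot's product and chain rules) differ only in [norm_factor]. *)
Lemma is_derive_C_AbsRing (f : C -> C) (z l : C) :
  @is_derive C_AbsRing C_NormedModule f z l <->
  @is_derive C_AbsRing (AbsRing_NormedModule C_AbsRing) f z l.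
Proof.
  split; intros [[Hadd Hscal [M HM]] Hd];
    (split; [split; [exact Hadd|exact Hscal|now exists M]|exact Hd]).
Qed.

Lemma is_derive_of_remainder (f : C -> C) (z l : C) (K : R) :
  (forall h, Cmod h <= 1 -> Cmod (f (z + h) - f z - h * l)%C <= K * Cmod h * Cmod h) ->
  is_derive f z l.
Proof.
  intros Hrem; apply is_derive_C_AbsRing; split; [apply is_linear_scal_l|].
  intros y Hy eps.
  apply (@is_filter_lim_locally_unique C_AbsRing (AbsRing_NormedModule C_AbsRing)) in Hy.
  subst y.
  apply (@locally_le_locally_norm C_AbsRing (AbsRing_NormedModule C_AbsRing)).
  set (K' := Rabs K + 1).
  assert (HK' : 0 < K') by (pose proof (Rabs_pos K); unfold K'; lra).
  assert (Hr : 0 < Rmin 1 (eps / K')).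
  { apply Rmin_pos; [lra|apply Rdiv_lt_0_compat; [apply cond_pos|exact HK']]. }
  exists (mkposreal _ Hr); intros y Hy; unfold ball_norm in Hy; simpl in Hy.
  change (norm ?u) with (Cmod u) in *.
  change (minus (minus (f y) (f z)) (scal (minus y z) l))
    with (f y - f z - (y - z) * l)%C.
  change (minus y z) with (y - z)%C in *.
  set (h := (y - z)%C) in *.
  replace y with (z + h)%C by (unfold h; ring).
  pose proof (Rmin_l 1 (eps / K')); pose proof (Rmin_r 1 (eps / K')).
  pose proof (Cmod_ge_0 h) as Hh0.
  assert (HhK : Cmod h * K' <= eps).
  { apply (Rmult_le_reg_r (/ K')); [now apply Rinv_0_lt_compat|].
    rewrite Rmult_assoc, Rinv_r by lra; lra. }
  eapply Rle_trans; [apply Hrem; lra|].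
  assert (K <= K') by (pose proof (Rle_abs K); unfold K'; lra).
  nra.
Qed.

Lemma is_derive_cexp (z : C) : is_derive cexp z (cexp z).
Proof.
  apply (is_derive_of_remainder _ _ _ (Cmod (cexp z) * 12)); intros h Hh.
  replace (cexp (z + h) - cexp z - h * cexp z)%C with (cexp z * (cexp h - 1 - h))%C
    by (rewrite cexp_add; ring).
  rewrite Cmod_mult, !Rmult_assoc.
  apply Rmult_le_compat_l; [apply Cmod_ge_0|].
  rewrite <- !Rmult_assoc; apply cexp_remainder, Hh.
Qed.

Open Scope C_scope.

Lemma is_derive_C_mult (f g : C -> C) (z df dg : C) :
  is_derive f z df -> is_derive g z dg ->
  is_derive (fun s => f s * g s) z (df * g z + f z * dg).
Proof.
  intros Hf%is_derive_C_AbsRing Hg%is_derive_C_AbsRing; apply is_derive_C_AbsRing.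
  apply (is_derive_mult f g z df dg Hf Hg), Cmult_comm.
Qed.

Lemma is_derive_C_id (z : C) : is_derive (fun s : C => s) z (RtoC 1).
Proof. apply is_derive_C_AbsRing, (is_derive_id (K := C_AbsRing)). Qed.

Lemma is_derive_C_const (c z : C) : is_derive (fun _ : C => c) z (RtoC 0).
Proof. apply (is_derive_const (K := C_AbsRing) (V := C_NormedModule)). Qed.

Lemma is_derive_cexp_comp (g : C -> C) (z dg : C) :
  is_derive g z dg -> is_derive (fun s => cexp (g s)) z (dg * cexp (g z)).
Proof.
  intros Hg%is_derive_C_AbsRing.
  exact (is_derive_comp cexp g z (cexp (g z)) dg (is_derive_cexp (g z)) Hg).
Qed.

(* Differential polynomials in v^1, v^2 with E = e^{-3 v^1} adjoined;
   [Var1 a b] stands for the mixed derivative d_t^a d_x^b v^1. *)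
Inductive dpoly : Type :=
| Const (c : C)
| Var1 (a b : nat)
| Var2 (a b : nat)
| Exp
| Add (p q : dpoly)
| Sub (p q : dpoly)
| Mul (p q : dpoly).

Declare Scope dpoly_scope.
Delimit Scope dpoly_scope with dp.
Bind Scope dpoly_scope with dpoly.
Infix "+" := Add : dpoly_scope.
Infix "-" := Sub : dpoly_scope.
Infix "*" := Mul : dpoly_scope.

Definition env := nat -> nat -> C.

Fixpoint eval (g1 g2 : env) (p : dpoly) : C :=
  match p with
  | Const c => c
  | Var1 a b => g1 a b
  | Var2 a b => g2 a b
  | Exp => cexp (- RtoC 3 * g1 O O)
  | Add p q => eval g1 g2 p + eval g1 g2 q
  | Sub p q => eval g1 g2 p - eval g1 g2 q
  | Mul p q => eval g1 g2 p * eval g1 g2 q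
  end.

Fixpoint deval (g1 g2 d1 d2 : env) (p : dpoly) : C :=
  match p with
  | Const _ => 0
  | Var1 a b => d1 a b
  | Var2 a b => d2 a b
  | Exp => - RtoC 3 * d1 O O * cexp (- RtoC 3 * g1 O O)
  | Add p q => deval g1 g2 d1 d2 p + deval g1 g2 d1 d2 q
  | Sub p q => deval g1 g2 d1 d2 p - deval g1 g2 d1 d2 q
  | Mul p q => deval g1 g2 d1 d2 p * eval g1 g2 q + eval g1 g2 p * deval g1 g2 d1 d2 q
  end.

Fixpoint DX (p : dpoly) : dpoly :=
  match p with
  | Const _ => Const 0
  | Var1 a b => Var1 a (S b)
  | Var2 a b => Var2 a (S b)
  | Exp => Const (- RtoC 3) * Var1 O 1 * Exp
  | Add p q => DX p + DX q
  | Sub p q => DX p - DX q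
  | Mul p q => DX p * q + p * DX q
  end.

Fixpoint DT (p : dpoly) : dpoly :=
  match p with
  | Const _ => Const 0
  | Var1 a b => Var1 (S a) b
  | Var2 a b => Var2 (S a) b
  | Exp => Const (- RtoC 3) * Var1 1 O * Exp
  | Add p q => DT p + DT q
  | Sub p q => DT p - DT q
  | Mul p q => DT p * q + p * DT q
  end.

Fixpoint DXn (n : nat) (p : dpoly) : dpoly :=
  match n with O => p | S n => DX (DXn n p) end.

Fixpoint DTn (n : nat) (p : dpoly) : dpoly :=
  match n with O => p | S n => DT (DTn n p) end.

Definition shift_x (g : env) : env := fun a b => g a (S b).
Definition shift_t (g : env) : env := fun a b => g (S a) b.

Lemma eval_DX (g1 g2 : env) (p : dpoly) :
  eval g1 g2 (DX p) = deval g1 g2 (shift_x g1) (shift_x g2) p.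
Proof. induction p; simpl; rewrite ?IHp1, ?IHp2; reflexivity. Qed.

Lemma eval_DT (g1 g2 : env) (p : dpoly) :
  eval g1 g2 (DT p) = deval g1 g2 (shift_t g1) (shift_t g2) p.
Proof. induction p; simpl; rewrite ?IHp1, ?IHp2; reflexivity. Qed.

Lemma is_derive_eval (p : dpoly) (G1 G2 : C -> env) (d1 d2 : env) (s : C) :
  (forall a b, is_derive (fun r => G1 r a b) s (d1 a b)) ->
  (forall a b, is_derive (fun r => G2 r a b) s (d2 a b)) ->
  is_derive (fun r => eval (G1 r) (G2 r) p) s (deval (G1 s) (G2 s) d1 d2 p).
Proof.
  intros H1 H2; induction p; simpl.
  - apply is_derive_C_const.
  - apply H1.
  - apply H2.
  - replace (- RtoC 3 * d1 O O * cexp (- RtoC 3 * G1 s O O))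
      with ((0 * G1 s O O + - RtoC 3 * d1 O O) * cexp (- RtoC 3 * G1 s O O)) by ring.
    apply (is_derive_cexp_comp (fun r => - RtoC 3 * G1 r O O)),
      (is_derive_C_mult (fun _ => - RtoC 3) (fun r => G1 r O O));
      [apply is_derive_C_const|apply H1].
  - now apply (is_derive_plus (V := C_NormedModule)).
  - now apply (is_derive_minus (V := C_NormedModule)).
  - now apply is_derive_C_mult.
Qed.

Definition sem_eq (p q : dpoly) : Prop := forall g1 g2, eval g1 g2 p = eval g1 g2 q.

(* [deval g1 g2 d1 d2 p] is the derivative at 0 of
   [r |-> eval (g1 + r d1) (g2 + r d2) p], so it only depends on [eval _ _ p]. *)
Lemma deval_sem_eq (p q : dpoly) (g1 g2 d1 d2 : env) :
  sem_eq p q -> deval g1 g2 d1 d2 p = deval g1 g2 d1 d2 q.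
Proof.
  intros Hpq.
  set (line := fun (g d : env) (r : C) a b => g a b + r * d a b).
  assert (Hline : forall g d a b, is_derive (fun r => line g d r a b) (RtoC 0) (d a b)).
  { intros g d a b.
    replace (d a b) with (0 + (1 * d a b + 0 * 0)) by ring.
    apply (is_derive_plus (V := C_NormedModule)); [apply is_derive_C_const|].
    apply is_derive_C_mult; [apply is_derive_C_id|apply is_derive_C_const]. }
  assert (Hline0 : forall g d, line g d (RtoC 0) = g).
  { intros g d; do 2 (apply functional_extensionality; intro); unfold line; ring. }
  pose proof (is_derive_eval p _ _ d1 d2 (RtoC 0) (Hline g1 d1) (Hline g2 d2)) as Hp.
  pose proof (is_derive_eval q _ _ d1 d2 (RtoC 0) (Hline g1 d1) (Hline g2 d2)) as Hq.
  rewrite !Hline0 in Hp, Hq.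
  apply is_C_derive_unique in Hp, Hq; rewrite <- Hp, <- Hq.
  f_equal; apply functional_extensionality; intro; apply Hpq.
Qed.

Lemma DT_sem_eq (p q : dpoly) : sem_eq p q -> sem_eq (DT p) (DT q).
Proof. intros Hpq g1 g2; rewrite !eval_DT; now apply deval_sem_eq. Qed.

Lemma DX_DT_sem_eq (p : dpoly) : sem_eq (DX (DT p)) (DT (DX p)).
Proof.
  intros g1 g2; induction p; simpl; rewrite ?IHp1, ?IHp2; try reflexivity; ring.
Qed.

Lemma DX_DTn_sem_eq (n : nat) (p : dpoly) : sem_eq (DX (DTn n p)) (DTn n (DX p)).
Proof.
  revert p; induction n as [|n IHn]; intros p g1 g2; [reflexivity|].
  simpl; rewrite DX_DT_sem_eq; apply DT_sem_eq, IHn.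
Qed.

Definition env_at (V : nat -> nat -> C -> C -> C) (t x : C) : env :=
  fun a b => V a b t x.

Definition eval_at (V1 V2 : nat -> nat -> C -> C -> C) (p : dpoly) (t x : C) : C :=
  eval (env_at V1 t x) (env_at V2 t x) p.

Section EvalOnFamilies.

Variables (U : C -> C -> Prop) (V1 V2 : nat -> nat -> C -> C -> C).
Hypotheses (HV1 : deriv_family U V1) (HV2 : deriv_family U V2).

Lemma is_pdx_eval_at (p : dpoly) : is_pdx U (eval_at V1 V2 p) (eval_at V1 V2 (DX p)).
Proof.
  intros t x Hx; unfold eval_at; rewrite eval_DX.
  apply (is_derive_eval p (fun y => env_at V1 t y) (fun y => env_at V2 t y));
    intros a b; [apply (proj1 (HV1 a b))|apply (proj1 (HV2 a b))]; exact Hx.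
Qed.

Lemma is_pdt_eval_at (p : dpoly) : is_pdt U (eval_at V1 V2 p) (eval_at V1 V2 (DT p)).
Proof.
  intros t x Hx; unfold eval_at; rewrite eval_DT.
  apply (is_derive_eval p (fun s => env_at V1 s x) (fun s => env_at V2 s x));
    intros a b; [apply (proj2 (HV1 a b))|apply (proj2 (HV2 a b))]; exact Hx.
Qed.

Definition eval_family (p : dpoly) : nat -> nat -> C -> C -> C :=
  fun a b => eval_at V1 V2 (DTn a (DXn b p)).

Lemma deriv_family_eval_family (p : dpoly) : deriv_family U (eval_family p).
Proof.
  intros a b; split; [|apply is_pdt_eval_at].
  intros t x Hx; unfold eval_family.
  replace (eval_at V1 V2 (DTn a (DXn (S b) p)) t x)
    with (eval_at V1 V2 (DX (DTn a (DXn b p))) t x) by apply DX_DTn_sem_eq.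
  now apply is_pdx_eval_at.
Qed.

End EvalOnFamilies.

Lemma open2_locally_x (U : C -> C -> Prop) (t x : C) :
  open2 U -> U t x -> @locally (AbsRing_UniformSpace C_AbsRing) x (fun y => U t y).
Proof.
  intros HU Hx; destruct (HU t x Hx) as [eps [Heps Hball]].
  apply (@locally_le_locally_norm C_AbsRing (AbsRing_NormedModule C_AbsRing)).
  exists (mkposreal eps Heps); intros y Hy; apply Hball; [|exact Hy].
  replace (t - t) with (RtoC 0) by ring; now rewrite Cmod_0.
Qed.

Lemma is_pdx_unique (U : C -> C -> Prop) (f g f' g' : C -> C -> C) :
  open2 U -> is_pdx U f f' -> is_pdx U g g' ->
  (forall t x, U t x -> f t x = g t x) ->
  forall t x, U t x -> f' t x = g' t x.
Proof.
  intros HU Hf Hg Hfg t x Hx.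
  pose proof (Hf t x Hx) as Hf'; pose proof (Hg t x Hx) as Hg'.
  apply (is_derive_ext_loc _ (fun y => g t y)) in Hf'.
  - apply is_C_derive_unique in Hf', Hg'; congruence.
  - apply (filter_imp (fun y => U t y)); [now intros y; apply Hfg|].
    now apply open2_locally_x.
Qed.

Lemma deriv_family_DXn (U : C -> C -> Prop) (V1 V2 W : nat -> nat -> C -> C -> C)
    (p : dpoly) :
  open2 U -> deriv_family U V1 -> deriv_family U V2 -> deriv_family U W ->
  (forall t x, U t x -> W 1%nat O t x = eval_at V1 V2 p t x) ->
  forall b t x, U t x -> W 1%nat b t x = eval_at V1 V2 (DXn b p) t x.
Proof.
  intros HU HV1 HV2 HW Hp b; induction b as [|b IHb]; [exact Hp|].
  apply (is_pdx_unique U (W 1%nat b) (eval_at V1 V2 (DXn b p))); trivial.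
  - apply HW.
  - now apply is_pdx_eval_at.
Qed.

Fixpoint xorder (p : dpoly) : nat :=
  match p with
  | Var1 _ b | Var2 _ b => b
  | Add p q | Sub p q | Mul p q => Nat.max (xorder p) (xorder q)
  | _ => O
  end.

(* The time index of a variable is ignored: meaningful only for polynomials in
   x-derivatives. *)
Definition jet_eval (p : dpoly) (j1 j2 : jet) : C :=
  eval (fun _ b => j1 b) (fun _ b => j2 b) p.

Lemma depends_upto_jet_eval (N : nat) (p : dpoly) :
  (xorder p <= N)%nat -> depends_upto N (jet_eval p).
Proof.
  intros Hp j1 j2 k1 k2 Hjk; unfold jet_eval.
  induction p; simpl in *.
  - reflexivity.
  - exact (proj1 (Hjk b Hp)).
  - exact (proj2 (Hjk b Hp)).
  - now rewrite (proj1 (Hjk O (Nat.le_0_l N))).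
  all: rewrite IHp1, IHp2 by lia; reflexivity.
Qed.

Lemma is_derive_jupd (j : jet) (k b : nat) (z : C) :
  is_derive (fun s => jupd j k s b) z (if Nat.eqb b k then RtoC 1 else RtoC 0).
Proof.
  unfold jupd; destruct (Nat.eqb b k); [apply is_derive_C_id|apply is_derive_C_const].
Qed.

Lemma holo_on_jets_jet_eval (N : nat) (D : jet -> jet -> Prop) (p : dpoly) :
  holo_on_jets N D (jet_eval p).
Proof.
  intros j1 j2 _ k _; split; eexists; unfold jet_eval.
  - apply (is_derive_eval p (fun s _ b => jupd j1 k s b) (fun _ _ b => j2 b));
      intros a b; [apply is_derive_jupd|apply is_derive_C_const].
  - apply (is_derive_eval p (fun _ _ b => j1 b) (fun s _ b => jupd j2 k s b));
      intros a b; [apply is_derive_C_const|apply is_derive_jupd].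
Qed.

Lemma evolution_system_jet_eval (N : nat) (P1 P2 : dpoly) :
  (xorder P1 <= N)%nat -> (xorder P2 <= N)%nat ->
  evolution_system N (fun _ _ => True) (jet_eval P1) (jet_eval P2).
Proof.
  intros H1 H2.
  split; [now apply depends_upto_jet_eval|].
  split; [now apply depends_upto_jet_eval|].
  split; [now intros j1 j2 k1 k2 _|].
  split; [intros j1 j2 _; exists 1%R; split; [lra|trivial]|].
  split; [now exists (fun _ => RtoC 0), (fun _ => RtoC 0)|].
  split; apply holo_on_jets_jet_eval.
Qed.

Notation v1 := (Var1 O).
Notation v2 := (Var2 O).

Definition u2 : dpoly := (v2 1 + v1 1 * v2 0 - Exp)%dp.
Definition u1 : dpoly := (v1 2 + v1 1 * v1 1 + u2 * u2)%dp.

Definition rhs1 : dpoly :=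
  (Const 2 * v1 1 * v1 1 * v1 1 + Const 3 * v1 1 * u2 * u2 - Const 3 * u2 * DX u2
   - v1 3)%dp.
Definition rhs2 : dpoly :=
  (v1 1 * DX u2 - DXn 2 u2 + (Const 2 * u1 + u2 * u2) * (u2 + Exp) - v2 0 * rhs1)%dp.

Theorem mainTheorem10 :
  exists (N : nat) (D : jet -> jet -> Prop) (R1 R2 : jet -> jet -> C),
    evolution_system N D R1 R2 /\
    forall (U : C -> C -> Prop) (V1 V2 : nat -> nat -> C -> C -> C),
      is_solution D R1 R2 U V1 V2 ->
      KK_solution U (miura_u1 V1 V2) (miura_u2 V1 V2).
Proof.
  exists 3%nat, (fun _ _ => True), (jet_eval rhs1), (jet_eval rhs2); split.
  { apply evolution_system_jet_eval; compute; lia. }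
  intros U V1 V2 (HU & HV1 & HV2 & Hsol).
  (* [rhs1], [rhs2] involve x-derivatives only, so [jet_eval] agrees with [eval_at]
     by conversion. *)
  pose proof (deriv_family_DXn U V1 V2 V1 rhs1 HU HV1 HV2 HV1
    (fun t x Hx => proj1 (proj2 (Hsol t x Hx)))) as HR1.
  pose proof (deriv_family_DXn U V1 V2 V2 rhs2 HU HV1 HV2 HV2
    (fun t x Hx => proj2 (proj2 (Hsol t x Hx)))) as HR2.
  exists (eval_family V1 V2 u1), (eval_family V1 V2 u2).
  split; [now apply deriv_family_eval_family|].
  split; [now apply deriv_family_eval_family|].
  split; [now split|].
  intros t x Hx; unfold eval_family, eval_at, env_at; cbn.
  rewrite !HR1, !HR2 by exact Hx.
  unfold eval_at, env_at; cbn.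
  split; ring.
Qed.
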